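(* Let $K=\mathfrak{b}(m,n)$ be a 2-bridge knot with associated Riley polynomial $\Phi(x,u)\in\mathbb{Z}[x,u]$, let $k$ be an algebraically closed field whose characteristic does not divide the discriminant of $\Phi(2,u)\in\mathbb{Z}[u]$, and let $\mathcal{O}$ be a complete discrete valuation ring with residue field $k$. Then for any root $\beta\in k$ of $\Phi(2,u)=0$ there is a unique power series $u(x)\in\mathcal{O}[[x-2]]^{\times}$ such that $\beta=u(2)\bmod\mathfrak{m}_{\mathcal{O}}$ and $\Phi(x,u(x))=0$ in $\mathcal{O}[[x-2]]$.
   Context: $K=\mathfrak{b}(m,n)$ is the 2-bridge knot in Schubert form, $m,n$ odd integers with $m>0$, $-m<n<m$, $\gcd(m,n)=1$. Set $\epsilon_i=(-1)^{\lfloor in/m\rfloor}$. For a unit $\alpha$ and an element $\beta$ of a commutative ring, let $C(\alpha)=\begin{pmatrix}\alpha&1\\0&\alpha^{-1}\end{pmatrix}$, $D(\alpha,\beta)=\begin{pmatrix}\alpha&0\\\beta&\alpha^{-1}\end{pmatrix}$, and $W(\alpha,\beta)=C(\alpha)^{\epsilon_1}D(\alpha,\beta)^{\epsilon_2}\cdots C(\alpha)^{\epsilon_{m-2}}D(\alpha,\beta)^{\epsilon_{m-1}}$; there are Laurent polynomials $w_{ij}(t,u)\in\mathbb{Z}[t^{\pm1},u]$ with $W(\alpha,\beta)=(w_{ij}(\alpha,\beta))$. Put $\varphi(t,u)=w_{11}(t,u)+(t^{-1}-t)w_{12}(t,u)$. The Riley polynomial $\Phi(x,u)\in\mathbb{Z}[x,u]$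 is the unique polynomial with $\Phi(t+t^{-1},u)=t^{l}\varphi(t,u)$ for some integer $l$. *)

From HB Require Import structures.
From mathcomp Require Import all_boot all_order all_algebra.
Set Implicit Arguments. Unset Strict Implicit. Unset Printing Implicit Defensive.
Import Order.TTheory GRing.Theory Num.Theory.
Local Open Scope ring_scope.

Definition schubert_params (m : nat) (n : int) : Prop :=
  [/\ odd m, (0 < m)%N, odd (absz n), - (m%:Z) < n < m%:Z & coprimez m%:Z n].

(* epsilon_i = (-1)^(floor(i n / m)); for m > 0, divz is floor division. *)
Definition riley_eps (m : nat) (n : int) (i : nat) : bool :=
  (* true means epsilon_i = -1 *)
  odd (absz ((i%:Z * n) %/ m%:Z)%Z).

(* Z[t,u] = {poly {poly int}} with outer variable u and inner variable t;
   Z[t^{+-1},u] embeds into the field of fractions LF. *)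
Definition LF := {fraction {poly {poly int}}}.
Definition LF_t : LF := tofrac ('X%:P).
Definition LF_u : LF := tofrac 'X.

Definition Cmx (a : LF) : 'M[LF]_2 := \matrix_(i < 2, j < 2)
  (if (val i == 0%N) && (val j == 0%N) then a
   else if (val i == 0%N) then 1
   else if (val j == 0%N) then 0 else a^-1).
Definition Dmx (a b : LF) : 'M[LF]_2 := \matrix_(i < 2, j < 2)
  (if (val i == 0%N) && (val j == 0%N) then a
   else if (val i == 0%N) then 0
   else if (val j == 0%N) then b else a^-1).

Definition mxpow_eps (e : bool) (M : 'M[LF]_2) : 'M[LF]_2 :=
  if e then invmx M else M.

Definition riley_W (m : nat) (n : int) : 'M[LF]_2 :=
  \prod_(i < m.-1)
     mxpow_eps (riley_eps m n i.+1)
       (if odd i.+1 then Cmx LF_t else Dmx LF_t LF_u).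

Definition riley_phi (m : nat) (n : int) : LF :=
  riley_W m n 0 0 + (LF_t^-1 - LF_t) * riley_W m n 0 1.

(* Evaluation of P(x,u) in Z[x,u] (outer variable u, inner variable x)
   at x := x0, u := u0 in a commutative ring. *)
Definition eval2 (R : comNzRingType) (P : {poly {poly int}}) (x0 u0 : R) : R :=
  (map_poly (fun c : {poly int} => (map_poly intr c).[x0]) P).[u0].

Definition is_riley_poly (m : nat) (n : int) (Phi : {poly {poly int}}) : Prop :=
  exists l : int, eval2 Phi (LF_t + LF_t^-1) LF_u = LF_t ^ l * riley_phi m n.

Definition riley_at2 (Phi : {poly {poly int}}) : {poly int} :=
  map_poly (fun c : {poly int} => c.[2]) Phi.

Definition discr (f : {poly int}) : int :=
  let d := (size f).-1 in
  (-1) ^+ ((d * d.-1) %/ 2) * ((resultant f f^`()) %/ lead_coef f)%Z.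

Definition rdvd (R : comNzRingType) (a b : R) : Prop := exists c, b = a * c.

Definition is_uniformizer (O : idomainType) (p0 : O) : Prop :=
  [/\ p0 != 0, p0 \notin GRing.unit &
      forall x : O, x != 0 -> exists (e : nat) (v : O),
        v \is a GRing.unit /\ x = v * p0 ^+ e].

Definition madic_complete (O : idomainType) (p0 : O) : Prop :=
  forall a : nat -> O,
    (forall N : nat, exists M : nat, forall i j : nat, (M <= i)%N -> (M <= j)%N ->
        rdvd (p0 ^+ N) (a i - a j)) ->
    exists l : O, forall N : nat, exists M : nat, forall i : nat, (M <= i)%N ->
        rdvd (p0 ^+ N) (a i - l).

(* O is a complete DVR whose residue field is identified with k via the
   surjective ring morphism res : O -> k with kernel the maximal ideal. *)
Definition complete_dvr_residue (O : idomainType) (k : fieldType)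
    (res : {rmorphism O -> k}) : Prop :=
  exists p0 : O, [/\ is_uniformizer p0, madic_complete p0,
    (forall y : k, exists x : O, res x = y) &
    (forall x : O, res x = 0 <-> rdvd p0 x)].

Definition pser (R : Type) := nat -> R.

Definition ps_add (R : comNzRingType) (a b : pser R) : pser R := fun i => a i + b i.
Definition ps_mul (R : comNzRingType) (a b : pser R) : pser R :=
  fun i => \sum_(j < i.+1) a j * b (i - j)%N.
Definition ps_one (R : comNzRingType) : pser R := fun i => if i == 0%N then 1 else 0.
Definition ps_zero (R : comNzRingType) : pser R := fun _ => 0.
Definition ps_of_poly (R : comNzRingType) (p : {poly R}) : pser R := fun i => p`_i.

Definition ps_unit (R : comNzRingType) (a : pser R) : Prop :=
  exists b : pser R, ps_mul a b = ps_one R.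

(* Phi(x, u(x)) as an element of O[[x-2]]: for Phi in Z[x,u]
   (outer variable u), substitute x := 2 + y and u := u(y) (Horner scheme). *)
Definition ps_eval_riley (R : comNzRingType) (Phi : {poly {poly int}})
    (u : pser R) : pser R :=
  foldr (fun (c : {poly int}) (acc : pser R) =>
           ps_add (ps_of_poly (map_poly intr (c \Po ('X + 2%:P)))) (ps_mul acc u))
        (ps_zero R) Phi.

(* At x = 2, i.e. t = 1, the Riley matrices become unipotent integer matrices, so
   f = Phi(2,u) has leading coefficient +-1 and constant term 1.  Hence the
   discriminant hypothesis makes beta a simple, nonzero root of f, and Hensel's lemma
   in the complete DVR O lifts it to a simple root a0 of f in O, unique among the roots
   reducing to beta.  The equation Phi(2 + y, u(y)) = 0 is then solved coefficient by
   coefficient: its n-th coefficient is u_n f'(a0) plus terms involving only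
   u_0, ..., u_(n-1), and f'(a0) is a unit.  This gives a unique solution with
   u(0) = a0, invertible in O[[y]] because a0 is a unit. *)

From HB Require Import structures.
From mathcomp Require Import all_boot all_order all_algebra.
From Stdlib Require Import FunctionalExtensionality.
From mathcomp Require Import ring zify.
Set Implicit Arguments. Unset Strict Implicit. Unset Printing Implicit Defensive.
Import Order.TTheory GRing.Theory Num.Theory.
Local Open Scope ring_scope.

Lemma horner_Taylor (R : comNzRingType) (P : {poly R}) x h :
  exists r, P.[x + h] = P.[x] + h * P^`().[x] + h ^+ 2 * r.
Proof.
elim/poly_ind: P => [|P c [r Hr]]; first by exists 0; rewrite deriv0 !horner0 !mulr0 !addr0.
exists (r * (x + h) + P^`().[x]).
rewrite derivMXaddC !(hornerE, hornerD, hornerM, hornerX, hornerC) Hr; ring.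
Qed.

(** * Solving power series equations coefficient by coefficient *)

Section CoefficientwiseSolving.
Variable R : comNzRingType.

Definition ps_add_at (u : pser R) (n : nat) (d : R) : pser R :=
  fun i => if i == n then u n + d else u i.

Definition ps_const (a : R) : pser R := fun i => if i == 0%N then a else 0.

Definition causal (F : pser R -> pser R) :=
  forall u v j, (forall l, (l <= j)%N -> u l = v l) -> F u j = F v j.

Definition top_coef_slope (F : pser R -> pser R) (a0 c : R) :=
  forall u n d, (0 < n)%N -> u 0%N = a0 -> F (ps_add_at u n d) n = F u n + d * c.

Variables (F : pser R -> pser R) (a0 c ci : R).
Hypotheses (F_causal : causal F) (F_slope : top_coef_slope F a0 c) (cK : ci * c = 1).

Lemma causal_root_exists : F (ps_const a0) 0%N = 0 ->
  exists u : pser R, u 0%N = a0 /\ forall i, F u i = 0.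
Proof.
move=> F0.
pose U := fix U n := if n is n'.+1 then ps_add_at (U n') n (- (F (U n') n * ci))
                      else ps_const a0.
have U0 n : U n 0%N = a0 by elim: n => [|n IH] //=; rewrite /ps_add_at.
have U_root n j : (j <= n)%N -> F (U n) j = 0.
  elim: n j => [|n IH] j; first by rewrite leqn0 => /eqP->.
  rewrite leq_eqVlt => /orP[/eqP->|ltjn].
    by rewrite /= F_slope // ?U0 // mulNr -mulrA cK mulr1 subrr.
  rewrite /= -(IH j) //; apply: F_causal => l hl; rewrite /ps_add_at.
  by rewrite ifN // neq_ltn ltnS (leq_trans hl ltjn).
have U_stable n l : (l <= n)%N -> U n l = U l l.
  elim: n => [|n IH]; first by rewrite leqn0 => /eqP->.
  rewrite leq_eqVlt => /orP[/eqP->//|ltln].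
  by rewrite /= /ps_add_at ifN ?IH // neq_ltn ltln.
exists (fun i => U i i); split => [|i]; first exact: U0.
by rewrite -(U_root i i) //; apply: F_causal => l hl; rewrite U_stable.
Qed.

Lemma causal_root_unique u v : u 0%N = a0 -> v 0%N = a0 ->
  (forall i, F u i = 0) -> (forall i, F v i = 0) -> u = v.
Proof.
move=> u0 v0 Fu Fv; apply: functional_extensionality_dep => i.
elim: i {-2}i (leqnn i) => [|i IH] l; first by rewrite leqn0 => /eqP->; rewrite u0 v0.
rewrite leq_eqVlt => /orP[/eqP->|]; last exact: IH.
pose d := v i.+1 - u i.+1.
have : F v i.+1 = F (ps_add_at u i.+1 d) i.+1.
  apply: F_causal => j hj; rewrite /ps_add_at.
  case: eqP => [->|/eqP nji]; first by rewrite addrC subrK.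
  by apply/esym/IH; rewrite -ltnS ltn_neqAle nji.
rewrite F_slope ?u0 // Fu Fv add0r => /(congr1 (fun x => x * ci)).
by rewrite mul0r -mulrA [c * ci]mulrC cK mulr1 /d => /eqP; rewrite eq_sym subr_eq0 => /eqP.
Qed.

End CoefficientwiseSolving.

Lemma ps_unit_of_unit_coef0 (R : comUnitRingType) (u : pser R) :
  u 0%N \is a GRing.unit -> ps_unit u.
Proof.
move=> u0; pose F (b : pser R) : pser R := fun i => ps_mul u b i - ps_one R i.
have F_causal : causal F.
  move=> a b j ab; rewrite /F /ps_mul; congr (_ - _); apply: eq_bigr => l _.
  by rewrite ab // leq_subr.
have F_slope : top_coef_slope F (u 0%N)^-1 (u 0%N).
  move=> b n d n0 _; rewrite /F /ps_mul /ps_add_at !big_ord_recl /= !subn0 eqxx.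
  rewrite (eq_bigr (fun i : 'I_n => u (bump 0 i) * b (n - bump 0 i)%N)); last first.
    by move=> i _; rewrite ifN // /bump /=; apply/eqP; lia.
  by rewrite mulrDr; ring.
have F0 : F (ps_const (u 0%N)^-1) 0%N = 0.
  by rewrite /F /ps_mul big_ord_recl big_ord0 /ps_const /ps_one /= mulrV // addr0 subrr.
have [b [_ Fb]] := causal_root_exists F_causal F_slope (mulVr u0) F0.
by exists b; apply: functional_extensionality_dep => i; apply/eqP; rewrite -subr_eq0; apply/eqP/Fb.
Qed.

Section RileySeries.
Variables (R : comNzRingType) (Phi : {poly {poly int}}).

Definition ps_trunc (u : pser R) (i : nat) : {poly R} := \poly_(j < i.+1) u j.

Definition ps_agree (a : pser R) (i : nat) (p : {poly R}) :=
  forall j, (j <= i)%N -> a j = p`_j.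

Lemma ps_agreeD a b p q i : ps_agree a i p -> ps_agree b i q ->
  ps_agree (ps_add a b) i (p + q).
Proof. by move=> ha hb j hj; rewrite /ps_add coefD ha ?hb. Qed.

Lemma ps_agreeM a b p q i : ps_agree a i p -> ps_agree b i q ->
  ps_agree (ps_mul a b) i (p * q).
Proof.
move=> ha hb j hj; rewrite /ps_mul coefM; apply: eq_bigr => l _.
have hl : (l <= j)%N by rewrite -ltnS.
rewrite ha ?hb //; [exact: leq_trans (leq_subr _ _) hj|exact: leq_trans hl hj].
Qed.

Lemma ps_agree_trunc u i : ps_agree u i (ps_trunc u i).
Proof. by move=> j hj; rewrite coef_poly ltnS hj. Qed.

Definition riley_shift : {poly {poly R}} :=
  Poly (map (fun c => map_poly intr (c \Po ('X + 2%:P))) Phi).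

Lemma ps_eval_rileyE u i : ps_eval_riley Phi u i = (riley_shift.[ps_trunc u i])`_i.
Proof.
suff : ps_agree (ps_eval_riley Phi u) i riley_shift.[ps_trunc u i] by apply.
rewrite /ps_eval_riley /riley_shift; elim: (polyseq Phi) => [|c s IH] /=.
  by move=> j _; rewrite horner0 coef0.
rewrite horner_cons [X in ps_agree _ _ X]addrC; apply: ps_agreeD => //.
by apply: ps_agreeM => //; apply: ps_agree_trunc.
Qed.

Lemma ps_eval_riley_causal : causal (@ps_eval_riley R Phi).
Proof.
move=> u v j uv; rewrite !ps_eval_rileyE; congr ((riley_shift.[_])`_j).
by apply/polyP => l; rewrite !coef_poly; case: ifP => // hl; apply: uv.
Qed.

Let f : {poly R} := map_poly intr (riley_at2 Phi).

Lemma coef0_riley_shift : map_poly (coefp 0) riley_shift = f.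
Proof.
apply/polyP => j; rewrite /riley_shift -map_polyE coef_map coef_map_id0; last first.
  by rewrite comp_poly0 map_poly0.
rewrite /f coef_map /riley_at2 coef_map_id0 ?horner0 //=.
by rewrite coef_map /= -horner_coef0 horner_comp !hornerE.
Qed.

Lemma coef0_horner (P : {poly {poly R}}) Z :
  (P.[Z])`_0 = (map_poly (coefp 0) P).[Z`_0].
Proof. by rewrite -[Z`_0]/(coefp 0 Z) horner_map. Qed.

Lemma ps_eval_riley0 v : ps_eval_riley Phi v 0%N = f.[v 0%N].
Proof. by rewrite ps_eval_rileyE coef0_horner coef0_riley_shift coef_poly. Qed.

Lemma ps_eval_riley_slope a0 : top_coef_slope (@ps_eval_riley R Phi) a0 f^`().[a0].
Proof.
move=> u n d n0 u0; rewrite !ps_eval_rileyE.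
have -> : ps_trunc (ps_add_at u n d) n = ps_trunc u n + d *: 'X^n.
  apply/polyP => l; rewrite coefD coefZ coefXn !coef_poly /ps_add_at.
  by case: (eqVneq l n) => [->|_]; rewrite ?ltnSn ?mulr1 ?mulr0 ?addr0.
have [r ->] := horner_Taylor riley_shift (ps_trunc u n) (d *: 'X^n).
rewrite !coefD -scalerAl coefZ coefXnM ltnn subnn exprZn -scalerAl coefZ.
rewrite -exprM coefXnM ifT; last by rewrite -{1}(muln1 n) ltn_pmul2l.
rewrite mulr0 addr0 coef0_horner -deriv_map coef0_riley_shift coef_poly /= u0.
by rewrite mulrC.
Qed.

End RileySeries.

(** * Hensel's lemma in a complete discrete valuation ring *)

Section Divisibility.
Variable R : comNzRingType.
Implicit Types a b x y : R.

Lemma rdvd_refl a : rdvd a a. Proof. by exists 1; rewrite mulr1. Qed.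
Lemma rdvd0 a : rdvd a 0. Proof. by exists 0; rewrite mulr0. Qed.
Lemma rdvdD a x y : rdvd a x -> rdvd a y -> rdvd a (x + y).
Proof. by move=> [b ->] [c ->]; exists (b + c); rewrite mulrDr. Qed.
Lemma rdvdN a x : rdvd a x -> rdvd a (- x).
Proof. by move=> [b ->]; exists (- b); rewrite mulrN. Qed.
Lemma rdvdB a x y : rdvd a x -> rdvd a y -> rdvd a (x - y).
Proof. by move=> ax ay; apply/rdvdD/rdvdN. Qed.
Lemma rdvdMr a x y : rdvd a x -> rdvd a (x * y).
Proof. by move=> [b ->]; exists (b * y); rewrite mulrA. Qed.
Lemma rdvd_trans a b x : rdvd a b -> rdvd b x -> rdvd a x.
Proof. by move=> [c ->] [d ->]; exists (c * d); rewrite mulrA. Qed.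
Lemma rdvd_exp a (N M : nat) : (N <= M)%N -> rdvd (a ^+ N) (a ^+ M).
Proof. by move=> leNM; exists (a ^+ (M - N)); rewrite -exprD subnKC. Qed.

End Divisibility.

Section DVRHensel.
Variables (O : idomainType) (k : fieldType) (res : {rmorphism O -> k}) (p0 : O).
Hypotheses (p0_unif : is_uniformizer p0) (res_ker : forall x, res x = 0 <-> rdvd p0 x).

Lemma res_unit x : res x != 0 -> x \is a GRing.unit.
Proof.
move=> resx; have x0 : x != 0 by apply: contraNneq resx => ->; rewrite rmorph0.
case: p0_unif => _ _ /(_ x x0) [[|e] [v [v_unit xE]]]; first by rewrite xE mulr1.
move: resx; rewrite (proj2 (res_ker x)) ?eqxx //.
by exists (v * p0 ^+ e); rewrite xE exprS; ring.
Qed.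

Lemma rdvd_exp_all_eq0 x : (forall N, rdvd (p0 ^+ N) x) -> x = 0.
Proof.
move=> divx; apply/eqP/negP => /negP x0.
case: p0_unif => p00 p0_nunit /(_ x x0) [e [v [v_unit xE]]].
have [c xc] := divx e.+1.
have : (v - c * p0) * p0 ^+ e = 0 by rewrite mulrBl -xE xc exprS; ring.
move/eqP; rewrite mulf_eq0 expf_eq0 (negPf p00) andbF orbF subr_eq0 => /eqP vE.
by move: v_unit; rewrite vE unitrM (negPf p0_nunit) andbF.
Qed.

Variables (f : {poly O}) (x0 e : O).
Hypotheses (fx0 : rdvd p0 f.[x0]) (eK : f^`().[x0] * e = 1).

Fixpoint newton (n : nat) : O :=
  if n is n'.+1 then newton n' - f.[newton n'] * e else x0.

Lemma newton_inv n : rdvd p0 (newton n - x0) /\ rdvd (p0 ^+ n.+1) f.[newton n].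
Proof.
elim: n => [|n [[b xnE] [a fxnE]]] /=; first by rewrite subrr expr1; split; [apply: rdvd0|].
set y := newton n in xnE fxnE *; split.
  rewrite addrAC xnE; apply: rdvdB; first by exists b.
  by exists (p0 ^+ n * a * e); rewrite fxnE exprS; ring.
(* expand [f] around [y] and [f'] around [x0]; the terms of order [p0 ^+ n.+1] cancel *)
have [r ->] := horner_Taylor f y (- (f.[y] * e)).
have [s] := horner_Taylor f^`() x0 (y - x0); rewrite addrC subrK => ->.
rewrite xnE fxnE.
set c := f^`().[x0]; set c2 := f^`()^`().[x0].
have -> : p0 ^+ n.+1 * a + - (p0 ^+ n.+1 * a * e) * (c + p0 * b * c2 + (p0 * b) ^+ 2 * s) +
     (- (p0 ^+ n.+1 * a * e)) ^+ 2 * r =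
     p0 ^+ n.+1 * a * (1 - c * e) - p0 ^+ n.+2 * (a * e * (b * c2 + p0 * b ^+ 2 * s)) +
     p0 ^+ n.+2 * (p0 ^+ n * a ^+ 2 * e ^+ 2 * r) by rewrite !exprS; ring.
rewrite eK subrr mulr0 add0r.
by apply: rdvdD; [apply: rdvdN|]; apply: rdvdMr; apply: rdvd_refl.
Qed.

Lemma newton_cauchy N i : (N <= i)%N -> rdvd (p0 ^+ N) (newton i - newton N).
Proof.
move=> /subnKC <-; elim: (i - N)%N => [|d IH]; first by rewrite addn0 subrr; apply: rdvd0.
rewrite addnS -(subrK (newton (N + d)) (newton (N + d).+1)) -addrA; apply: rdvdD => //.
rewrite /= addrAC subrr add0r; apply/rdvdN/rdvdMr.
by apply: rdvd_trans (proj2 (newton_inv _)); apply: rdvd_exp; lia.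
Qed.

Lemma dvr_hensel : madic_complete p0 ->
  exists a, f.[a] = 0 /\ rdvd p0 (a - x0).
Proof.
move=> complete.
have [l lim_l] : exists l, forall N, exists M, forall i, (M <= i)%N ->
    rdvd (p0 ^+ N) (newton i - l).
  apply: complete => N; exists N => i j Ni Nj.
  rewrite -(subrK (newton N) (newton i)) -(subrK (newton N) (newton j)).
  by rewrite opprD addrACA subrr addr0; apply: rdvdB; apply: newton_cauchy.
exists l; split.
  apply: rdvd_exp_all_eq0 => N; have [M lim_M] := lim_l N; set i := maxn M N.
  have dvd_li : rdvd (p0 ^+ N) (l - newton i) by rewrite -opprB; apply/rdvdN/lim_M/leq_maxl.
  rewrite -[l](subrK (newton i)) addrC.
  have [r ->] := horner_Taylor f (newton i) (l - newton i).
  apply: rdvdD; [apply: rdvdD|]; last by rewrite expr2 -mulrA; apply: rdvdMr.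
    apply: rdvd_trans (proj2 (newton_inv i)); apply: rdvd_exp.
    exact: leq_trans (leq_maxr _ _) (leqnSn _).
  exact: rdvdMr.
have [M lim_M] := lim_l 1%N.
rewrite -(subrK (newton M) l) -addrA; apply: rdvdD; last exact: (proj1 (newton_inv M)).
by rewrite -opprB; apply/rdvdN; rewrite -[p0]expr1; apply: lim_M.
Qed.

End DVRHensel.

Lemma simple_root_lift_unique (O : idomainType) (k : fieldType) (res : {rmorphism O -> k})
    (f : {poly O}) a b :
  f.[a] = 0 -> f.[b] = 0 -> res a = res b -> res f^`().[a] != 0 -> a = b.
Proof.
move=> fa fb res_ab f'a.
have [r] := horner_Taylor f a (b - a); rewrite addrC subrK fb fa add0r => taylor.
have : (b - a) * (f^`().[a] + (b - a) * r) = 0 by rewrite mulrDr mulrA -expr2 -taylor.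
move/eqP; rewrite mulf_eq0 subr_eq0 => /orP[/eqP //|/eqP/(congr1 res)].
by rewrite rmorphD rmorphM rmorphB res_ab subrr mul0r addr0 rmorph0 => /eqP; rewrite (negPf f'a).
Qed.

Lemma rmorph_horner_int (R S : comNzRingType) (g : {rmorphism R -> S}) (f : {poly int}) x :
  g (map_poly intr f).[x] = (map_poly intr f).[g x].
Proof.
rewrite -horner_map -map_poly_comp; congr (_.[_]).
by apply: eq_map_poly => c /=; rewrite rmorph_int.
Qed.

Lemma complete_dvr_res_unit (O : idomainType) (k : fieldType) (res : {rmorphism O -> k}) x :
  complete_dvr_residue res -> res x != 0 -> x \is a GRing.unit.
Proof. by move=> [p0 [unif _ _ res_ker]]; apply: (res_unit unif res_ker). Qed.

Lemma complete_dvr_lift_root (O : idomainType) (k : fieldType) (res : {rmorphism O -> k})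
    (f : {poly int}) beta :
  complete_dvr_residue res -> root (map_poly intr f) beta -> (map_poly intr f)^`().[beta] != 0 ->
  exists a : O, (map_poly intr f).[a] = 0 /\ res a = beta.
Proof.
move=> dvr f_beta f'_beta; have [p0 [unif complete res_onto res_ker]] := dvr.
have [x0 res_x0] := res_onto beta.
have f'x0 : res (map_poly intr f)^`().[x0] != 0.
  by rewrite deriv_map rmorph_horner_int -deriv_map res_x0.
have fx0 : rdvd p0 (map_poly intr f).[x0].
  by apply/res_ker; rewrite rmorph_horner_int res_x0; apply/eqP.
have [a [fa /res_ker]] := dvr_hensel unif fx0 (mulrV (complete_dvr_res_unit dvr f'x0)) complete.
by rewrite rmorphB res_x0 => /eqP; rewrite subr_eq0 => /eqP res_a; exists a.
Qed.

(** * The Riley polynomial at x = 2 *)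

Definition mk2 (R : Type) (a b c d : R) : 'M[R]_2 := \matrix_(i < 2, j < 2)
  (if val i == 0%N then (if val j == 0%N then a else b)
   else (if val j == 0%N then c else d)).

Lemma map_mk2 (R S : Type) (f : R -> S) a b c d :
  map_mx f (mk2 a b c d) = mk2 (f a) (f b) (f c) (f d).
Proof. by apply/matrixP => i j; rewrite !mxE; case: (val i == 0%N); case: (val j == 0%N). Qed.

Section TwoByTwo.
Variable R : pzSemiRingType.

Lemma mx2_eq (A B : 'M[R]_2) :
  A 0 0 = B 0 0 -> A 0 1 = B 0 1 -> A 1 0 = B 1 0 -> A 1 1 = B 1 1 -> A = B.
Proof.
have ord2 (i : 'I_2) : i = 0 \/ i = 1.
  by case: i => [[|[|i]] hi]; [left; apply: val_inj|right; apply: val_inj|].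
move=> h00 h01 h10 h11; apply/matrixP => i j.
by case: (ord2 i) => ->; case: (ord2 j) => ->.
Qed.

Lemma mulmx2E (A B : 'M[R]_2) i j : (A *m B) i j = A i 0 * B 0 j + A i 1 * B 1 j.
Proof.
have e0 : (ord0 : 'I_2) = 0 by apply: val_inj.
have e1 : lift ord0 ord0 = (1 : 'I_2) by apply: val_inj.
by rewrite mxE !big_ord_recl big_ord0 addr0 e0 e1.
Qed.

Lemma mk2_mul (a b c d a' b' c' d' : R) :
  mk2 a b c d *m mk2 a' b' c' d' =
  mk2 (a * a' + b * c') (a * b' + b * d') (c * a' + d * c') (c * b' + d * d').
Proof. by apply: mx2_eq; rewrite mulmx2E !mxE. Qed.

Lemma mk2_one : mk2 (1 : R) 0 0 1 = 1%:M.
Proof. by apply: mx2_eq; rewrite !mxE. Qed.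

End TwoByTwo.

Lemma scale_mk2 (R : pzRingType) (x a b c d : R) :
  x *: mk2 a b c d = mk2 (x * a) (x * b) (x * c) (x * d).
Proof. by apply/matrixP => i j; rewrite !mxE; case: (val i == 0%N); case: (val j == 0%N). Qed.

Lemma invmx_eq (R : comUnitRingType) (A B : 'M[R]_2) : A *m B = 1%:M -> invmx A = B.
Proof. by move=> AB; have [Au _] := mulmx1_unit AB; rewrite -[RHS](mulKmx Au) AB mulmx1. Qed.

Local Notation Zxu := {poly {poly int}}.
Local Notation toLF := (@tofrac Zxu).
Definition tZ : Zxu := 'X%:P.

Lemma LF_t_neq0 : LF_t != 0.
Proof. by rewrite /LF_t tofrac_eq0 polyC_eq0 polyX_eq0. Qed.

(* [t C(t)^{+-1}] and [t D(t,u)^{+-1}], which have polynomial entries *)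
Definition Cpoly (e : bool) : 'M[Zxu]_2 :=
  if e then mk2 1 (- tZ) 0 (tZ ^+ 2) else mk2 (tZ ^+ 2) tZ 0 1.
Definition Dpoly (e : bool) : 'M[Zxu]_2 :=
  if e then mk2 1 0 (- (tZ * 'X)) (tZ ^+ 2) else mk2 (tZ ^+ 2) 0 (tZ * 'X) 1.

Section ScaledGenerators.
Variables (F : fieldType) (t u : F).
Hypothesis t0 : t != 0.

Lemma C_scaled : mk2 t 1 0 t^-1 = t^-1 *: mk2 (t ^+ 2) t 0 1.
Proof. by rewrite scale_mk2; congr mk2; field. Qed.
Lemma invC_scaled : invmx (mk2 t 1 0 t^-1) = t^-1 *: mk2 1 (- t) 0 (t ^+ 2).
Proof. by apply: invmx_eq; rewrite scale_mk2 mk2_mul -mk2_one; congr mk2; field. Qed.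
Lemma D_scaled : mk2 t 0 u t^-1 = t^-1 *: mk2 (t ^+ 2) 0 (t * u) 1.
Proof. by rewrite scale_mk2; congr mk2; field. Qed.
Lemma invD_scaled : invmx (mk2 t 0 u t^-1) = t^-1 *: mk2 1 0 (- (t * u)) (t ^+ 2).
Proof. by apply: invmx_eq; rewrite scale_mk2 mk2_mul -mk2_one; congr mk2; field. Qed.

End ScaledGenerators.

Lemma Cmx_eps e : mxpow_eps e (Cmx LF_t) = LF_t^-1 *: map_mx toLF (Cpoly e).
Proof.
have -> : Cmx LF_t = mk2 LF_t 1 0 LF_t^-1 by apply: mx2_eq; rewrite !mxE.
rewrite /mxpow_eps /Cpoly; case: e; rewrite map_mk2 ?rmorph0 ?rmorph1 ?rmorphN rmorphXn /tZ -/LF_t.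
  exact: invC_scaled LF_t_neq0.
exact: C_scaled LF_t_neq0.
Qed.

Lemma Dmx_eps e : mxpow_eps e (Dmx LF_t LF_u) = LF_t^-1 *: map_mx toLF (Dpoly e).
Proof.
have -> : Dmx LF_t LF_u = mk2 LF_t 0 LF_u LF_t^-1 by apply: mx2_eq; rewrite !mxE.
rewrite /mxpow_eps /Dpoly; case: e;
  rewrite map_mk2 ?rmorph0 ?rmorph1 ?rmorphN rmorphXn rmorphM /tZ -/LF_t -/LF_u.
  exact: invD_scaled LF_t_neq0.
exact: D_scaled LF_t_neq0.
Qed.

Definition riley_factor (m : nat) (n : int) (i : nat) : 'M[Zxu]_2 :=
  (if odd i.+1 then Cpoly else Dpoly) (riley_eps m n i.+1).

Definition riley_Wpoly (m : nat) (n : int) : 'M[Zxu]_2 :=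
  \prod_(i < m.-1) riley_factor m n i.

Lemma riley_WE m n : riley_W m n = LF_t^-1 ^+ m.-1 *: map_mx toLF (riley_Wpoly m n).
Proof.
rewrite /riley_Wpoly rmorph_prod -[in RHS]iter_mulr_1 -big_const_ord -scaler_prod.
by apply: eq_bigr => i _; rewrite /riley_factor; case: odd; rewrite ?Cmx_eps ?Dmx_eps.
Qed.

(* [t^m phi(t,u)], a polynomial *)
Definition riley_phipoly (m : nat) (n : int) : Zxu :=
  tZ * riley_Wpoly m n 0 0 + (1 - tZ ^+ 2) * riley_Wpoly m n 0 1.

Lemma riley_phiE m n : (0 < m)%N -> LF_t ^+ m * riley_phi m n = toLF (riley_phipoly m n).
Proof.
case: m => // m _; rewrite /riley_phi riley_WE !mxE /riley_phipoly.
rewrite !rmorphD !rmorphM rmorphB rmorph1 rmorphXn /tZ -/LF_t /=.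
have clear_denom (F : fieldType) (t A B : F) : t != 0 ->
    t ^+ m.+1 * (t^-1 ^+ m * A + (t^-1 - t) * (t^-1 ^+ m * B)) = t * A + (1 - t ^+ 2) * B.
  move=> t0; have tm : t ^+ m != 0 by rewrite expf_neq0.
  by rewrite exprVn exprS; field; rewrite tm t0.
exact: clear_denom LF_t_neq0.
Qed.

Lemma toLF_horner (p : Zxu) : toLF p = (map_poly (fun c => toLF c%:P) p).[LF_u].
Proof.
rewrite (@horner_coef_wide _ (size p)) ?size_poly // -{1}(coefK p) poly_def rmorph_sum.
apply: eq_bigr => i _; rewrite coef_map_id0 ?rmorph0 //.
by rewrite -mul_polyC rmorphM rmorphXn.
Qed.

(* [t ^+ D * c(t + t^-1)], a polynomial in [t] when [D] bounds the degree of [c] *)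
Definition sym_clear (D : nat) (c : {poly int}) : {poly int} :=
  \sum_(i < size c) c`_i *: (('X ^+ 2 + 1) ^+ i * 'X ^+ (D - i)).

Lemma sym_clear_eval D (c : {poly int}) : (size c <= D.+1)%N ->
  toLF (sym_clear D c)%:P = LF_t ^+ D * (map_poly intr c).[LF_t + LF_t^-1].
Proof.
move=> szc; rewrite (@horner_coef_wide _ (size c)) ?size_poly // mulr_sumr.
rewrite /sym_clear rmorph_sum rmorph_sum; apply: eq_bigr => -[i /= ltic] _.
rewrite coef_map /= -mul_polyC !(rmorphM, rmorphXn, rmorphD, rmorph1) /= -/LF_t.
have -> : toLF (c`_i)%:P%:P = (c`_i)%:~R.
  by rewrite -[c`_i in LHS]intz !rmorph_int.
have le_iD : (i <= D)%N by rewrite -ltnS (leq_trans ltic).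
have key (F : fieldType) (t x : F) : t != 0 ->
    x * ((t * t + 1) ^+ i * t ^+ (D - i)) = t ^+ D * (x * (t + t^-1) ^+ i).
  move=> t0; rewrite -[in t ^+ D](subnKC le_iD) exprD.
  have -> : t * t + 1 = t * (t + t^-1) by field.
  by rewrite exprMn; ring.
exact: key LF_t_neq0.
Qed.

Lemma sym_clear1 D (c : {poly int}) : (sym_clear D c).[1] = c.[2].
Proof.
rewrite /sym_clear horner_sum horner_coef; apply: eq_bigr => i _.
by rewrite hornerZ hornerM horner_exp !hornerXn hornerD hornerXn hornerC !expr1n mulr1.
Qed.

Definition at_t1 : {rmorphism Zxu -> {poly int}} := map_poly (horner_eval (1 : int)).

Lemma at_t1_tZ : at_t1 tZ = 1.
Proof. by rewrite /= /tZ map_polyC /= horner_evalE hornerX. Qed.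

Lemma at_t1_eq_of_frac (A B : Zxu) (a : nat) (z : int) :
  toLF A * LF_t ^+ a = LF_t ^ z * toLF B -> at_t1 A = at_t1 B.
Proof.
have cancel_t (p q : Zxu) (b c : nat) : toLF (p * tZ ^+ b) = toLF (tZ ^+ c * q) ->
    at_t1 p = at_t1 q.
  move/eqP; rewrite tofrac_eq => /eqP /(congr1 at_t1).
  by rewrite !rmorphM !rmorphXn /= at_t1_tZ !expr1n mulr1 mul1r.
have t0 := LF_t_neq0; case: z => b /= ABt.
  by apply: (cancel_t _ _ a b); rewrite !rmorphM !rmorphXn.
apply: (cancel_t _ _ (a + b.+1)%N 0%N); rewrite expr0 mul1r rmorphM rmorphXn exprD mulrA ABt.
have -> : LF_t ^ Negz b = (LF_t ^+ b.+1)^-1 by [].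
by rewrite mulrAC mulVf ?mul1r ?expf_neq0.
Qed.

Lemma riley_at2E m n Phi : (0 < m)%N -> is_riley_poly m n Phi ->
  riley_at2 Phi = at_t1 (riley_phipoly m n).
Proof.
move=> m0 [l riley_Phi].
pose D := (\max_(i < size Phi) size (Phi`_i)%R)%N.
have szD j : (size (Phi`_j)%R <= D.+1)%N.
  case: (ltnP j (size Phi)) => [ltj|lej]; last by rewrite nth_default ?size_poly0.
  by apply: leq_trans (leqnSn _); rewrite /D (bigD1 (Ordinal ltj)) //= leq_maxl.
pose H := map_poly (sym_clear D) Phi.
have sym_clear0 : sym_clear D 0 = 0 by rewrite /sym_clear size_poly0 big_ord0.
have toLF_H : toLF H = LF_t ^+ D * eval2 Phi (LF_t + LF_t^-1) LF_u.
  rewrite toLF_horner /eval2 (@horner_coef_wide _ (size Phi)); last first.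
    exact: leq_trans (size_poly _ _) (size_poly _ _).
  rewrite (@horner_coef_wide _ (size Phi)) ?size_poly // mulr_sumr.
  apply: eq_bigr => i _; rewrite !coef_map_id0 ?rmorph0 ?map_poly0 ?horner0 //.
  by rewrite sym_clear_eval // mulrA.
transitivity (at_t1 H).
  apply/polyP => j; rewrite /H /riley_at2.
  by rewrite /= !coef_map_id0 ?horner_evalE ?horner0 //= sym_clear1.
apply: (@at_t1_eq_of_frac _ _ m (D%:Z + l)).
rewrite toLF_H riley_Phi -riley_phiE // exprzDr ?unitfE ?LF_t_neq0 //.
by rewrite -!mulrA [riley_phi m n * _]mulrC.
Qed.

Definition unipotent_row (j : nat) (p q : {poly int}) :=
  [/\ size p = (j./2).+1, p`_0 = 1 &
     if odd j then size q = (j./2).+1 /\ lead_coef q ^+ 2 = 1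
     else lead_coef p ^+ 2 = 1 /\ (size q <= j./2)%N].

Lemma unipotent_rowC j p q (a : int) : ~~ odd j -> a ^+ 2 = 1 ->
  unipotent_row j p q -> unipotent_row j.+1 p (p * a%:P + q).
Proof.
move=> ej a2 [szp p0]; rewrite (negPf ej) => -[lp szq].
have a0 : a != 0 by apply: contra_eq_neq a2 => ->; rewrite expr0n.
have szpa : size (p * a%:P) = size p by rewrite mulrC size_Cmul.
have ltqpa : (size q < size (p * a%:P)%R)%N by rewrite szpa szp ltnS.
split => //=; rewrite ?uphalf_half (negPf ej) add0n //.
split; first by rewrite size_polyDl // szpa.
by rewrite lead_coefDl // mulrC mul_polyC lead_coefZ exprMn a2 lp mul1r.
Qed.

Lemma unipotent_rowD j p q (b : int) : odd j -> b ^+ 2 = 1 ->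
  unipotent_row j p q -> unipotent_row j.+1 (p + q * (b%:P * 'X)) q.
Proof.
move=> oj b2 [szp p0]; rewrite oj => -[szq lq].
have b0 : b != 0 by apply: contra_eq_neq b2 => ->; rewrite expr0n.
have szqb : size (q * (b%:P * 'X)) = (size q).+1.
  by rewrite mulrCA size_Cmul // size_mulX // -size_poly_eq0 szq.
have ltpqb : (size p < size (q * (b%:P * 'X))%R)%N by rewrite szqb szp szq.
have half_j : j.+1./2 = (j./2).+1 by rewrite /= uphalf_half oj.
split; rewrite ?half_j /= ?oj /=.
- by rewrite addrC size_polyDl // szqb szq.
- by rewrite coefD coef0M coef0M coefX !mulr0 addr0.
split; last by rewrite szq.
rewrite addrC lead_coefDl // mulrCA mul_polyC lead_coefZ lead_coefMX.
by rewrite exprMn b2 lq mul1r.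
Qed.

Definition unipotent_factor (s : bool) (i : nat) : 'M[{poly int}]_2 :=
  if odd i.+1 then mk2 1 ((-1) ^+ s)%:P 0 1 else mk2 1 0 (((-1) ^+ s)%:P * 'X) 1.

Lemma unipotent_row_prod (s : nat -> bool) j :
  let P := \prod_(i < j) unipotent_factor (s i) i in unipotent_row j (P 0 0) (P 0 1).
Proof.
elim: j => [|j IH] /=.
  rewrite big_ord0 !mxE /=; split; rewrite ?size_poly1 ?coef1 //=.
  by rewrite lead_coef1 expr1n size_poly0.
rewrite big_ord_recr /= -mulmxE !mulmx2E /unipotent_factor.
case: ifP => oj; rewrite !mxE /= !mulr1 mulr0 ?addr0 ?add0r.
  by apply: unipotent_rowC; rewrite ?sqrr_sign -?oddS ?oj.
by apply: unipotent_rowD; rewrite ?sqrr_sign //; move: oj => /= /negbFE.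
Qed.

Lemma riley_factor_at_t1 m n i :
  map_mx at_t1 (riley_factor m n i) = unipotent_factor (riley_eps m n i.+1) i.
Proof.
rewrite /riley_factor /unipotent_factor /Cpoly /Dpoly.
case: odd; case: riley_eps; rewrite map_mk2 ?rmorph0 ?rmorph1 ?rmorphN ?rmorphXn ?rmorphM at_t1_tZ.
all: by rewrite expr1n /= ?map_polyX ?mul1r ?mulN1r.
Qed.

Lemma riley_at2_lead_const m n Phi : odd m -> is_riley_poly m n Phi ->
  lead_coef (riley_at2 Phi) ^+ 2 = 1 /\ (riley_at2 Phi)`_0 = 1.
Proof.
move=> om riley_Phi; have m0 : (0 < m)%N by move: om; case: (m).
rewrite (riley_at2E m0 riley_Phi) /riley_phipoly !rmorphD !rmorphM rmorphB rmorph1 rmorphXn.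
rewrite at_t1_tZ expr1n subrr mul0r addr0 mul1r.
have -> : at_t1 (riley_Wpoly m n 0 0) = map_mx at_t1 (riley_Wpoly m n) 0 0 by rewrite mxE.
rewrite /riley_Wpoly rmorph_prod (eq_bigr _ (fun (i : 'I_m.-1) _ => riley_factor_at_t1 m n i)).
case: (unipotent_row_prod (fun i => riley_eps m n i.+1) m.-1) => _ ->.
have -> : odd m.-1 = false by move: om; case: (m) => // m' /= /negbTE.
by case.
Qed.

(** * Simple roots of Phi(2,u) *)

Lemma resultant_eq0_of_common_root (k : comNzRingType) (p q : {poly int}) (b : k) :
  (1 < size p)%N -> (1 < size q)%N ->
  root (map_poly intr p) b -> root (map_poly intr q) b -> (resultant p q)%:~R = 0 :> k.
Proof.
move=> szp szq /eqP pb /eqP qb; have [[u v] /= _ resE] := resultant_in_ideal szp szq.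
have := congr1 (fun r => (map_poly (intr : int -> k) r).[b]) resE.
by rewrite /= map_polyC hornerC => ->; rewrite !rmorphD !rmorphM /= hornerD !hornerM pb qb !mulr0 addr0.
Qed.

Lemma deriv_root_neq0 (k : fieldType) (f : {poly int}) (b : k) :
  lead_coef f ^+ 2 = 1 -> (discr f)%:~R != 0 :> k -> root (map_poly intr f) b ->
  (map_poly intr f)^`().[b] != 0.
Proof.
move=> lf2 discr0 fb; rewrite deriv_map.
have lf : (lead_coef f == 1) || (lead_coef f == -1) by rewrite -sqrf_eq1 lf2.
have lf0 : lead_coef f != 0 by apply: contra_eq_neq lf2 => ->; rewrite expr0n.
have lfk : (lead_coef f)%:~R != 0 :> k.
  by case/orP: lf => /eqP ->; rewrite ?rmorphN rmorph1 ?oppr_eq0 oner_neq0.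
have [szf|szf] := leqP (size f) 1.
  move: lfk fb; rewrite [f]size1_polyC // lead_coefC map_polyC /root hornerC.
  by move/negPf->.
have [szf2|szf2] := leqP (size f) 2.
  have sz2 : size f = 2 by apply/eqP; rewrite eqn_leq szf2 szf.
  have szf' : (size f^`() <= 1)%N by apply: leq_trans (size_poly _ _) _; rewrite sz2.
  rewrite [f^`()]size1_polyC // map_polyC hornerC /= coef_deriv mulr1n.
  by move: lfk; rewrite lead_coefE sz2.
have szf' : (1 < size f^`())%N.
  rewrite ltnNge; apply/negP => szf'.
  have : f^`()`_(size f).-2 = 0.
    by apply/nth_default/(leq_trans szf'); case: (size f) szf2 => [|[|[]]].
  rewrite coef_deriv; have -> : (size f).-2.+1 = (size f).-1 by case: (size f) szf2 => [|[]].
  by rewrite -lead_coefE => /eqP; rewrite mulrn_eq0 (negPf lf0) orbF; lia.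
have resf : (resultant f f^`())%:~R != 0 :> k.
  apply: contraNneq discr0 => res0; rewrite /discr.
  by case/orP: lf => /eqP ->; rewrite ?divzN divz1 !rmorphM ?rmorphN /= res0 ?oppr0 mulr0.
apply: contra resf => /eqP f'b; apply/eqP/(resultant_eq0_of_common_root szf szf' fb).
by rewrite -deriv_map /root deriv_map f'b.
Qed.

Unset Implicit Arguments.

Theorem corollary4p1p4 (m : nat) (n : int) (Phi : {poly {poly int}})
    (k : closedFieldType) (O : idomainType) (res : {rmorphism O -> k}) :
  schubert_params m n ->
  is_riley_poly m n Phi ->
  (discr (riley_at2 Phi))%:~R != (0 : k) ->
  complete_dvr_residue res ->
  forall beta : k, root (map_poly intr (riley_at2 Phi)) beta ->
  exists! u : pser O,
    [/\ ps_unit u, res (u 0%N) = beta & ps_eval_riley Phi u = ps_zero O].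
Proof.
move=> [om _ _ _ _] riley_Phi discr0 dvr beta f_beta.
have [lf2 f0] := riley_at2_lead_const om riley_Phi.
have f'_beta := deriv_root_neq0 lf2 discr0 f_beta.
have beta0 : beta != 0.
  by apply: contraTneq f_beta => ->; rewrite /root horner_coef0 coef_map /= f0 rmorph1 oner_neq0.
have [a0 [fa0 res_a0]] := complete_dvr_lift_root dvr f_beta f'_beta.
have f'a0 : res (map_poly intr (riley_at2 Phi))^`().[a0] != 0.
  by rewrite deriv_map rmorph_horner_int -deriv_map res_a0.
have F_causal := @ps_eval_riley_causal O Phi.
have F_slope := @ps_eval_riley_slope O Phi a0.
have slopeK := mulVr (complete_dvr_res_unit dvr f'a0).
have [u [u0 Fu]] := causal_root_exists F_causal F_slope slopeK (etrans (ps_eval_riley0 _ _) fa0).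
exists u; split.
  split; [|by rewrite u0|exact: functional_extensionality_dep].
  by apply/ps_unit_of_unit_coef0/(complete_dvr_res_unit dvr); rewrite u0 res_a0.
move=> v [_ res_v Fv]; have {}Fv i : ps_eval_riley Phi v i = 0 by rewrite Fv.
have v0 : v 0%N = a0.
  apply/esym/(simple_root_lift_unique fa0 _ _ f'a0); last by rewrite res_v res_a0.
  by rewrite -ps_eval_riley0 Fv.
by apply: (causal_root_unique F_causal F_slope slopeK u0 v0).
Qed.
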